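(* For every binary decision tree $T$ on $\mathcal X$ in which every node $n$ satisfies $\mathcal I(n)\neq\emptyset$, the cost of the corresponding solution graph $\mathcal S(T)$ satisfies $\mathrm{cost}(\mathcal S(T))=-\log P(T,\mathcal Y\mid\mathcal X)$. Consequently, a minimum-cost solution graph of $\mathcal G_{\mathcal X,\mathcal Y}$ corresponds to a maximum a posteriori tree, i.e. a tree maximizing $P(T\mid\mathcal Y,\mathcal X)\propto P(\mathcal Y\mid\mathcal X,T)P(T\mid\mathcal X)$.
   Context: Let $x_1,\dots,x_N\in\{0,1\}^F$ be a binary dataset $\mathcal X$ with labels $\mathcal Y=(y_1,\dots,y_N)\in\{0,1\}^N$, and $[N]=\{1,\dots,N\}$. For $\mathcal I\subseteq[N]$, $f\in[F]$, $k\in\{0,1\}$ let $\mathcal I|_{f=k}=\{i\in\mathcal I:(x_i)_f=k\}$, $c^k(\mathcal I)=|\{i\in\mathcal I:y_i=k\}|$, and $\mathcal V(\mathcal I)=\{f\in[F]:\mathcal I|_{f=0}\neq\emptyset\text{ and }\mathcal I|_{f=1}\neq\emptyset\}$. Fix $\rho^1,\rho^0>0$, $\alpha\in(0,1)$, $\beta\ge 0$. Let $B$ be the Beta function, $\ell_{\rm leaf}(c^1,c^0)=B(c^1+\rho^1,c^0+\rho^0)/B(\rho^1,\rho^0)$, $p_{\rm split}(d)=\alpha(1+d)^{-\beta}$, $p_{\rm leaf}(d,\mathcal I)=1$ if $\mathcal V(\mathcal I)=\emptyset$ and $1-p_{\rm split}(d)$ otherwise, $p_{\rm inner}(d,\mathcal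 I)=0$ if $\mathcal V(\mathcal I)=\emptyset$ and $p_{\rm split}(d)/|\mathcal V(\mathcal I)|$ otherwise; $-\log 0=+\infty$. The AND/OR graph $\mathcal G_{\mathcal X,\mathcal Y}$: for every nonempty $\mathcal I\subseteq[N]$ and $d\in\{0,\dots,F\}$ there is an OR node $o_{\mathcal I,d}$ and a terminal node $t_{\mathcal I,d}$, with an edge $o_{\mathcal I,d}\to t_{\mathcal I,d}$ of cost $-\log p_{\rm leaf}(d,\mathcal I)-\log\ell_{\rm leaf}(c^1(\mathcal I),c^0(\mathcal I))$. For every such OR node with $d<F$ and every $f\in\mathcal V(\mathcal I)$ there is an AND node $a_{\mathcal I,d,f}$ with an edge $o_{\mathcal I,d}\to a_{\mathcal I,d,f}$ of cost $-\log p_{\rm inner}(d,\mathcal I)$ and edges of cost $0$ from $a_{\mathcal I,d,f}$ to $o_{\mathcal I|_{f=0},d+1}$ and to $o_{\mathcal I|_{f=1},d+1}$. The root is $r=o_{[N],0}$; only nodes reachable from $r$ are kept. A solution graph is a set $\mathcal S$ of nodes with $r\in\mathcal S$, every node of $\mathcal S$ reachable from $r$ inside $\mathcal S$, every AND node of $\mathcal S$ having both children in $\mathcal S$, every OR node of $\mathcal S$ having exactly one child in $\mathcal S$; its cost $\mathrm{cost}(\mathcal S)$ is the sum of the costs of the edges $u\to v$ with $u,v\in\mathcal S$. A binary decision tree $T$ on $\mathcal X$ is a finite rooted tree in which each internal node $m$ is labeled by a feature $f(m)\in[F]$ and has a $0$-child and a $1$-child; $d(n)$ is the depth of node $n$ (root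 depth $0$), $\mathcal I(\mathrm{root})=[N]$ and the $k$-child of $m$ has $\mathcal I(m)|_{f(m)=k}$. The corresponding solution graph is $\mathcal S(T)=\{o_{\mathcal I(n),d(n)}:n\in T\}\cup\{t_{\mathcal I(n),d(n)}:n\text{ leaf}\}\cup\{a_{\mathcal I(m),d(m),f(m)}:m\text{ internal}\}$ (a bijection onto solution graphs). Prior and likelihood: $P(T\mid\mathcal X)=\prod_{l\text{ leaf}}p_{\rm leaf}(d(l),\mathcal I(l))\prod_{m\text{ internal}}p_{\rm inner}(d(m),\mathcal I(m))$, $P(\mathcal Y\mid\mathcal X,T)=\prod_{l\text{ leaf}}\ell_{\rm leaf}(c^1(\mathcal I(l)),c^0(\mathcal I(l)))$ (the marginal likelihood when each leaf has a Bernoulli label distribution with a $\mathrm{Beta}(\rho^1,\rho^0)$ prior on its parameter), and $P(T,\mathcal Y\mid\mathcal X)=P(\mathcal Y\mid\mathcal X,T)P(T\mid\mathcal X)$. *)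

From HB Require Import structures.
From mathcomp Require Import all_boot all_order all_algebra.
From mathcomp Require Import all_classical all_reals all_analysis.
Set Implicit Arguments. Unset Strict Implicit. Unset Printing Implicit Defensive.
Import Order.TTheory GRing.Theory Num.Theory.
Local Open Scope ring_scope.

Definition Beta (R : realType) (a b : R) : R :=
  fine (\int[@lebesgue_measure R]_(x in `]0%R, 1%R[%classic)
          ((powR x (a - 1)) * (powR (1 - x) (b - 1)))%:E)%E.

Definition nlog (R : realType) (x : R) : \bar R :=
  if x == 0 then +oo%E else (- ln x)%:E.

Inductive node (N F : nat) :=
| OrN of {set 'I_N} & 'I_F.+1
| TermN of {set 'I_N} & 'I_F.+1
| AndN of {set 'I_N} & 'I_F.+1 & 'I_F.

Section NodeFin.
Variables N F : nat.
Definition node_enc (u : node N F) :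
  ({set 'I_N} * 'I_F.+1) + ({set 'I_N} * 'I_F.+1) + ({set 'I_N} * 'I_F.+1 * 'I_F) :=
  match u with
  | OrN A d => inl (inl (A, d))
  | TermN A d => inl (inr (A, d))
  | AndN A d f => inr (A, d, f)
  end.
Definition node_dec (x : ({set 'I_N} * 'I_F.+1) + ({set 'I_N} * 'I_F.+1)
                          + ({set 'I_N} * 'I_F.+1 * 'I_F)) : node N F :=
  match x with
  | inl (inl (A, d)) => OrN A d
  | inl (inr (A, d)) => TermN A d
  | inr (A, d, f) => AndN A d f
  end.
Lemma node_encK : cancel node_enc node_dec. Proof. by case. Qed.
HB.instance Definition _ := Finite.copy (node N F) (can_type node_encK).
End NodeFin.

(* binary decision trees: Node f t0 t1 has 0-child t0 and 1-child t1 *)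
Inductive dtree (F : nat) := Leaf | Node of 'I_F & dtree F & dtree F.
Arguments Leaf {F}.

Section Model.
Variables (R : realType) (N F : nat) (X : 'I_N -> 'I_F -> bool) (Y : 'I_N -> bool).
Variables (rho1 rho0 alpha beta : R).

Definition restr (A : {set 'I_N}) (f : 'I_F) (k : bool) : {set 'I_N} :=
  [set i in A | X i f == k].
Definition cnt (k : bool) (A : {set 'I_N}) : nat := #|[set i in A | Y i == k]|.
Definition Vset (A : {set 'I_N}) : {set 'I_F} :=
  [set f : 'I_F | (restr A f false != finset.set0) && (restr A f true != finset.set0)].

Definition lleaf (c1 c0 : nat) : R :=
  Beta (c1%:R + rho1) (c0%:R + rho0) / Beta rho1 rho0.
Definition psplit (d : nat) : R := alpha * powR (1 + d%:R) (- beta).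
Definition pleaf (d : nat) (A : {set 'I_N}) : R :=
  if Vset A == finset.set0 then 1 else 1 - psplit d.
Definition pinner (d : nat) (A : {set 'I_N}) : R :=
  if Vset A == finset.set0 then 0 else psplit d / #|Vset A|%:R.

Definition is_edge (u v : node N F) : bool :=
  match u, v with
  | OrN A d, TermN A' d' => [&& A != finset.set0, A' == A & d' == d]
  | OrN A d, AndN A' d' f => [&& A != finset.set0, A' == A, d' == d, (d < F)%N & f \in Vset A]
  | AndN A d f, OrN A' d' =>
      [&& A != finset.set0, (d < F)%N, f \in Vset A,
          (A' == restr A f false) || (A' == restr A f true) & (d' == d.+1 :> nat)]
  | _, _ => false
  end.

Definition ecost (u v : node N F) : \bar R :=
  match u, v with
  | OrN A d, TermN _ _ => (nlog (pleaf d A) + nlog (lleaf (cnt true A) (cnt false A)))%E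
  | OrN A d, AndN _ _ _ => nlog (pinner d A)
  | _, _ => 0%E
  end.

Definition root : node N F := OrN [set: 'I_N] ord0.

Definition is_or (u : node N F) : bool := if u is OrN _ _ then true else false.
Definition is_and (u : node N F) : bool := if u is AndN _ _ _ then true else false.

Definition G_node (u : node N F) : bool := connect is_edge root u.

Definition solution_graph (S : {set node N F}) : Prop :=
  [/\ S \subset [set u | G_node u],
      root \in S,
      forall u, u \in S ->
        connect (fun a b => [&& a \in S, b \in S & is_edge a b]) root u,
      forall u, u \in S -> is_and u -> forall v, is_edge u v -> v \in S &
      forall u, u \in S -> is_or u -> #|[set v in S | is_edge u v]| = 1%N].

Definition cost (S : {set node N F}) : \bar R :=
  (\sum_(u in S) \sum_(v in S | is_edge u v) ecost u v)%E.

Fixpoint nonempty_nodes (T : dtree F) (A : {set 'I_N}) : bool :=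
  (A != finset.set0) &&
  match T with
  | Leaf => true
  | Node f t0 t1 => nonempty_nodes t0 (restr A f false) && nonempty_nodes t1 (restr A f true)
  end.

(* S(T) for the subtree T whose root has index set A and depth d.
   (Under nonempty_nodes, all depths are <= F, so inord is exact.) *)
Fixpoint solT (T : dtree F) (A : {set 'I_N}) (d : nat) : {set node N F} :=
  match T with
  | Leaf => [set OrN A (inord d); TermN A (inord d)]
  | Node f t0 t1 =>
      OrN A (inord d) |: (AndN A (inord d) f
        |: (solT t0 (restr A f false) d.+1 :|: solT t1 (restr A f true) d.+1))
  end.

Fixpoint prior (T : dtree F) (A : {set 'I_N}) (d : nat) : R :=
  match T with
  | Leaf => pleaf d A
  | Node f t0 t1 =>
      pinner d A * prior t0 (restr A f false) d.+1 * prior t1 (restr A f true) d.+1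
  end.

Fixpoint lik (T : dtree F) (A : {set 'I_N}) : R :=
  match T with
  | Leaf => lleaf (cnt true A) (cnt false A)
  | Node f t0 t1 => lik t0 (restr A f false) * lik t1 (restr A f true)
  end.

Definition joint (T : dtree F) : R := lik T [set: 'I_N] * prior T [set: 'I_N] 0.

End Model.

(* The solution graphs of G are exactly the graphs S(T): S(T) contains the root
   and every successor of its AND nodes, reaches all of its nodes from the root,
   and keeps exactly one successor of each OR node; conversely, unfolding a
   solution graph from the root yields a tree T with S(T) inside it, and the
   unique-successor condition propagates along paths to give equality.
   Along an edge the index set shrinks and the depth does not decrease, while
   sibling subtrees have disjoint index sets, so no edge of S(T) leads back to
   an ancestor or across to a sibling subtree.  Hence cost(S(T)) splits along
   the tree: every inner OR node contributes -log p_inner and every leaf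
   -log p_leaf - log l_leaf, which adds up to -log P(T, Y | X) because -log
   turns products of nonnegative reals into sums.  As -log is antitone, a
   minimum-cost solution graph is S(T) for a tree T of maximal joint probability. *)

From Pilot Require Import Defs.
From HB Require Import structures.
From mathcomp Require Import all_boot all_order all_algebra.
From mathcomp Require Import all_classical all_reals all_analysis.
From mathcomp Require Import fintype finset.
Set Implicit Arguments. Unset Strict Implicit. Unset Printing Implicit Defensive.
Import Order.TTheory GRing.Theory Num.Theory.
Local Open Scope ring_scope.

Lemma forward_closed_connect (T : finType) (e : rel T) (P : pred T) x y :
  (forall a b, P a -> e a b -> P b) -> connect e x y -> P x -> P y.
Proof.
move=> closed /connectP[p + ->]; elim: p x => //= z p IHp x /andP[exz pz] Px.
exact: IHp pz (closed _ _ Px exz).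
Qed.

Section NegLog.
Variable R : realType.

Lemma nlogM (x y : R) : 0 <= x -> 0 <= y -> nlog (x * y) = (nlog x + nlog y)%E.
Proof.
rewrite /nlog => x_ge0 y_ge0.
have [->|x_neq0] := eqVneq x 0; first by rewrite mul0r eqxx addye //; case: ifP.
have [->|y_neq0] := eqVneq y 0; first by rewrite mulr0 eqxx addey.
rewrite mulf_eq0 (negbTE x_neq0) (negbTE y_neq0) /=.
by rewrite lnM ?posrE ?lt0r ?x_neq0 ?y_neq0 // opprD EFinD.
Qed.

Lemma lee_nlog (x y : R) : 0 <= x -> 0 <= y -> (nlog x <= nlog y)%E = (y <= x).
Proof.
rewrite /nlog => x_ge0 y_ge0.
have [->|x_neq0] := eqVneq x 0; have [->|y_neq0] := eqVneq y 0; rewrite ?eqxx.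
- by rewrite !lexx.
- by rewrite !leNgt ltey lt0r y_neq0 y_ge0.
- by rewrite leey x_ge0.
- by rewrite lee_fin lerN2 ler_ln // posrE lt0r ?x_neq0 ?y_neq0.
Qed.
End NegLog.

Section Restriction.
Context {N F : nat} {X : 'I_N -> 'I_F -> bool}.

Lemma restr_sub (A : {set 'I_N}) f k : restr X A f k \subset A.
Proof. by apply/subsetP => i; rewrite inE => /andP[]. Qed.

Lemma restrS f k {A B : {set 'I_N}} : A \subset B -> restr X A f k \subset restr X B f k.
Proof. by move=> sAB; apply/subsetP => i; rewrite !inE => /andP[/(subsetP sAB) -> ->]. Qed.

Lemma disjoint_restr (A : {set 'I_N}) f : [disjoint restr X A f false & restr X A f true].
Proof. by rewrite -setI_eq0; apply/eqP/setP => i; rewrite !inE; case: (X i f); rewrite ?andbF. Qed.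

Lemma VsetS {A B : {set 'I_N}} : A \subset B -> Vset X A \subset Vset X B.
Proof.
move=> sAB; apply/subsetP => g; rewrite !inE -!subset0 => /andP[A0 A1].
by apply/andP; split; [apply: contra A0|apply: contra A1]; exact/subset_trans/restrS.
Qed.

Lemma Vset_restr_notin (A : {set 'I_N}) f k : f \notin Vset X (restr X A f k).
Proof.
rewrite inE negb_and !negbK; apply/orP.
by case: k; [left|right]; apply/eqP/setP => i; rewrite !inE; case: (X i f); rewrite ?andbF.
Qed.

Lemma card_Vset_restr (A : {set 'I_N}) f k :
  f \in Vset X A -> (#|Vset X (restr X A f k)| < #|Vset X A|)%N.
Proof.
move=> fA; rewrite [#|Vset X A|](cardsD1 f) fA ltnS.
apply: subset_leq_card; apply/subsetP => g gV.
rewrite in_setD1 (subsetP (VsetS (restr_sub A f k)) g gV) andbT.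
by apply: contraTneq gV => ->; rewrite Vset_restr_notin.
Qed.
End Restriction.

Section Nonnegativity.
Variables (R : realType) (N F : nat) (X : 'I_N -> 'I_F -> bool) (Y : 'I_N -> bool).
Variables (rho1 rho0 alpha beta : R).

Lemma Beta_ge0 (a b : R) : 0 <= Beta a b.
Proof.
apply: fine_ge0; apply: integral_ge0 => x _.
by rewrite lee_fin mulr_ge0 // powR_ge0.
Qed.

Lemma lik_ge0 T A : 0 <= lik X Y rho1 rho0 T A.
Proof.
elim: T A => [|f t0 IH0 t1 IH1] A /=; last exact: mulr_ge0.
by rewrite /lleaf divr_ge0 // Beta_ge0.
Qed.

Hypotheses (alpha_ge0 : 0 <= alpha) (alpha_le1 : alpha <= 1) (beta_ge0 : 0 <= beta).

Lemma psplit_ge0 d : 0 <= psplit alpha beta d.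
Proof. by rewrite mulr_ge0 // powR_ge0. Qed.

Lemma psplit_le1 d : psplit alpha beta d <= 1.
Proof.
have one_le : 1 <= (1 + d%:R) `^ beta.
  by rewrite -[leLHS](powRr0 (1 + d%:R)) ler_powR // lerDl.
by rewrite mulr_ile1 ?powR_ge0 // powRN invf_le1 // (lt_le_trans ltr01).
Qed.

Lemma pinner_ge0 d A : 0 <= pinner X alpha beta d A.
Proof. by rewrite /pinner; case: ifP; rewrite ?divr_ge0 ?psplit_ge0. Qed.

Lemma prior_ge0 T A d : 0 <= prior X alpha beta T A d.
Proof.
elim: T A d => [|f t0 IH0 t1 IH1] A d /=; last by rewrite !mulr_ge0 ?pinner_ge0.
by rewrite /pleaf; case: ifP; rewrite ?subr_ge0 ?psplit_le1.
Qed.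

Lemma joint_ge0 T : 0 <= joint X Y rho1 rho0 alpha beta T.
Proof. by rewrite mulr_ge0 ?lik_ge0 ?prior_ge0. Qed.
End Nonnegativity.

Section AndOrGraph.
Variables (R : realType) (N F : nat) (X : 'I_N -> 'I_F -> bool) (Y : 'I_N -> bool).
Variables (rho1 rho0 alpha beta : R).

Local Notation node := (node N F).
Local Notation E := (is_edge X).
Local Notation ecost := (ecost X Y rho1 rho0 alpha beta).
Local Notation cost := (cost X Y rho1 rho0 alpha beta).
Local Notation solT := (solT X).

Definition node_set (u : node) : {set 'I_N} :=
  match u with OrN A _ | TermN A _ | AndN A _ _ => A end.

Definition node_depth (u : node) : nat :=
  match u with OrN _ d | TermN _ d | AndN _ d _ => d end.

Lemma edge_node_set {u v} : E u v -> node_set v \subset node_set u.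
Proof.
case: u => [A d|A d|A d f]; case: v => [A' d'|A' d'|A' d' f'] //=.
- by case/and3P => _ /eqP->.
- by case/and5P => _ /eqP->.
- by case/and5P => _ _ _ /orP[]/eqP-> _; exact: restr_sub.
Qed.

Lemma edge_node_set0 {u v} : E u v -> node_set v != set0.
Proof.
case: u => [A d|A d|A d f]; case: v => [A' d'|A' d'|A' d' f'] //=.
- by case/and3P => ? /eqP->.
- by case/and5P => ? /eqP->.
- by case/and5P => _ _; rewrite inE => /andP[? ?] /orP[]/eqP->.
Qed.

Lemma edge_node_depth {u v} : E u v -> node_depth v = (node_depth u + is_and u)%N.
Proof.
case: u => [A d|A d|A d f]; case: v => [A' d'|A' d'|A' d' f'] //=.
- by case/and3P => _ _ /eqP->; rewrite addn0.
- by case/and5P => _ _ /eqP-> _ _; rewrite addn0.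
- by case/and5P => _ _ _ _ /eqP->; rewrite addn1.
Qed.

Definition below (B : {set 'I_N}) (d : nat) (u : node) : bool :=
  [&& node_set u \subset B, node_set u != set0 & (d <= node_depth u)%N].

Lemma below_edge B d u v : below B d u -> E u v -> below B d v.
Proof.
case/and3P => uB _ du e; rewrite /below (edge_node_set0 e).
by rewrite (subset_trans (edge_node_set e) uB) (edge_node_depth e) (leq_trans du) ?leq_addr.
Qed.

Lemma below_disjoint (B0 B1 : {set 'I_N}) d0 d1 u :
  [disjoint B0 & B1] -> below B0 d0 u -> below B1 d1 u -> False.
Proof.
move=> dB /and3P[uB0 u0 _] /and3P[uB1 _ _].
have : node_set u \subset B0 :&: B1 by rewrite subsetI uB0 uB1.
by rewrite (disjoint_setI0 dB) subset0 (negbTE u0).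
Qed.

Lemma below_noedge (B0 B1 : {set 'I_N}) d0 d1 u v :
  [disjoint B0 & B1] -> below B0 d0 u -> below B1 d1 v -> ~~ E u v.
Proof. by move=> dB u0 v1; apply/negP => e; apply: below_disjoint dB (below_edge u0 e) v1. Qed.

(* The budget d + |V(A)| <= F passes to the children because the split feature
   leaves V; it keeps all depths of S(T) at most F, where [inord] is exact. *)
Definition wf_subtree (T : dtree F) (A : {set 'I_N}) (d : nat) : bool :=
  nonempty_nodes X T A && (d + #|Vset X A| <= F)%N.

Lemma wf_subtree_depth T A d : wf_subtree T A d -> (d < F.+1)%N.
Proof. by case/andP => _; rewrite ltnS; apply: leq_trans; rewrite leq_addr. Qed.

Lemma wf_subtree_set0 T A d : wf_subtree T A d -> A != set0.
Proof. by case: T => [|? ? ?] /andP[/andP[]]. Qed.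

Lemma wf_subtree_Node f t0 t1 A d : wf_subtree (Node f t0 t1) A d ->
  [/\ A != set0, (d < F)%N, f \in Vset X A,
      wf_subtree t0 (restr X A f false) d.+1 & wf_subtree t1 (restr X A f true) d.+1].
Proof.
case/andP => /= /and3P[A0 ne0 ne1] dF.
have nonempty T B : nonempty_nodes X T B -> B != set0 by case: T => [|? ? ?] /andP[].
have fA : f \in Vset X A by rewrite inE (nonempty _ _ ne0) (nonempty _ _ ne1).
have sub k : (d.+1 + #|Vset X (restr X A f k)| <= F)%N.
  by rewrite addSnnS (leq_trans _ dF) // leq_add2l card_Vset_restr.
have d_lt_F : (d < F)%N := leq_trans (leq_addr _ _) (sub false).
by rewrite /wf_subtree ne0 ne1 !sub.
Qed.

Lemma wf_subtree_root T : nonempty_nodes X T [set: 'I_N] -> wf_subtree T [set: 'I_N] 0.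
Proof. by move=> ne; rewrite /wf_subtree ne add0n (leq_trans (max_card _)) ?card_ord. Qed.

Lemma solT_root T A d : OrN A (inord d) \in solT T A d.
Proof. by case: T => [|? ? ?]; rewrite !inE eqxx. Qed.

Lemma solT_LeafP A d u :
  u \in solT Leaf A d -> u = OrN A (inord d) \/ u = TermN A (inord d).
Proof. by rewrite !inE => /orP[]/eqP->; [left|right]. Qed.

Lemma solT_NodeP f t0 t1 A d u : u \in solT (Node f t0 t1) A d ->
  [\/ u = OrN A (inord d), u = AndN A (inord d) f,
       u \in solT t0 (restr X A f false) d.+1 | u \in solT t1 (restr X A f true) d.+1].
Proof.
rewrite !in_setU1 in_setU => /or3P[/eqP->|/eqP->|/orP[]].
- by constructor 1.
- by constructor 2.
- by constructor 3.
- by constructor 4.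
Qed.

Lemma solT_below T A d u : wf_subtree T A d -> u \in solT T A d -> below A d u.
Proof.
elim: T A d u => [|f t0 IH0 t1 IH1] A d u wf.
  have [dF A0] := (wf_subtree_depth wf, wf_subtree_set0 wf).
  by case/solT_LeafP => ->; rewrite /below /= subxx A0 inordK ?leqnn.
have [A0 dF fA wf0 wf1] := wf_subtree_Node wf.
case/solT_NodeP => [->|->|/(IH0 _ _ _ wf0)|/(IH1 _ _ _ wf1)].
1,2: by rewrite /below /= subxx A0 inordK ?leqnn // ltnW.
all: by case/and3P => uB u0 du; rewrite /below u0 (subset_trans uB (restr_sub _ _ _)) ltnW.
Qed.

Lemma edge_OrN_TermN (A : {set 'I_N}) e : A != set0 -> E (OrN A e) (TermN A e).
Proof. by move=> A0; rewrite /= A0 !eqxx. Qed.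

Lemma edge_OrN_AndN (A : {set 'I_N}) d f :
  A != set0 -> (d < F)%N -> f \in Vset X A ->
  E (OrN A (inord d)) (AndN A (inord d) f).
Proof. by move=> A0 dF fA; rewrite /= A0 fA !eqxx inordK ?dF // ltnW. Qed.

Lemma edge_AndN_OrN (A : {set 'I_N}) d f (k : bool) :
  A != set0 -> (d < F)%N -> f \in Vset X A ->
  E (AndN A (inord d) f) (OrN (restr X A f k) (inord d.+1)).
Proof.
move=> A0 dF fA; rewrite /= A0 fA (inordK (ltnW dF)) (@inordK F d.+1 dF) dF eqxx andbT.
by case: k; rewrite eqxx ?orbT.
Qed.

Lemma solT_child_sub f t0 t1 A d (k : bool) :
  solT (if k then t1 else t0) (restr X A f k) d.+1 \subset solT (Node f t0 t1) A d.
Proof. by apply/subsetP => v vS; rewrite !in_setU1 in_setU; case: k vS => ->; rewrite ?orbT. Qed.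

Lemma solT_child_closed f t0 t1 A d (k : bool) u v :
  wf_subtree (Node f t0 t1) A d ->
  u \in solT (if k then t1 else t0) (restr X A f k) d.+1 ->
  v \in solT (Node f t0 t1) A d -> E u v ->
  v \in solT (if k then t1 else t0) (restr X A f k) d.+1.
Proof.
move=> wf uS vS e; have [A0 dF fA wf0 wf1] := wf_subtree_Node wf.
have wfk : wf_subtree (if k then t1 else t0) (restr X A f k) d.+1 by case: k uS.
have vk := below_edge (solT_below wfk uS) e.
have /and3P[_ _ dv] := vk.
case/solT_NodeP: vS => [vo|va|vS|vS].
1,2: by move: dv; rewrite ?vo ?va /= inordK ?ltnn // ltnW.
- case: k {uS wfk} vk => // vk; exfalso.
  exact: below_disjoint (disjoint_restr A f) (solT_below wf0 vS) vk.
- case: k {uS wfk} vk => // vk; exfalso.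
  exact: below_disjoint (disjoint_restr A f) vk (solT_below wf1 vS).
Qed.

Lemma solT_and_closed T A d u v : wf_subtree T A d ->
  u \in solT T A d -> is_and u -> E u v -> v \in solT T A d.
Proof.
elim: T A d u v => [|f t0 IH0 t1 IH1] A d u v wf; first by case/solT_LeafP => ->.
have [A0 dF fA wf0 wf1] := wf_subtree_Node wf.
case/solT_NodeP => [->|->|uS|uS] // andu e.
- case: v e => // B e /= /and5P[_ _ _ /orP[]/eqP-> /eqP de];
    have -> : e = inord d.+1 by apply: val_inj; rewrite /= de !inordK // ltnW.
  + by apply: (subsetP (solT_child_sub f t0 t1 A d false)); rewrite solT_root.
  + by apply: (subsetP (solT_child_sub f t0 t1 A d true)); rewrite solT_root.
- apply: (subsetP (solT_child_sub f t0 t1 A d false)); exact: IH0 _ _ _ _ wf0 uS andu e.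
- apply: (subsetP (solT_child_sub f t0 t1 A d true)); exact: IH1 _ _ _ _ wf1 uS andu e.
Qed.

Lemma solT_or_succ T A d u : wf_subtree T A d ->
  u \in solT T A d -> is_or u -> #|[set v in solT T A d | E u v]| = 1%N.
Proof.
elim: T A d u => [|f t0 IH0 t1 IH1] A d u wf.
  case/solT_LeafP => -> // _; apply/eqP/cards1P; exists (TermN A (inord d)).
  apply/setP => v; rewrite in_set in_set1; apply/andP/eqP => [[]|->].
    by case/solT_LeafP => ->.
  by rewrite !inE eqxx orbT edge_OrN_TermN // (wf_subtree_set0 wf).
have [A0 dF fA wf0 wf1] := wf_subtree_Node wf.
case/solT_NodeP => [->|->|uS|uS] // oru.
- apply/eqP/cards1P; exists (AndN A (inord d) f); apply/setP => v; rewrite in_set in_set1.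
  apply/andP/eqP => [[vS e]|->]; last by rewrite !in_setU1 eqxx orbT edge_OrN_AndN.
  have := edge_node_depth e; rewrite /= inordK ?addn0 => [dv|]; last exact: ltnW.
  case/solT_NodeP: vS e => [->|->|vS|vS] //.
    by move/(solT_below wf0)/and3P: vS => [_ _]; rewrite dv ltnn.
  by move/(solT_below wf1)/and3P: vS => [_ _]; rewrite dv ltnn.
- rewrite -(IH0 _ _ _ wf0 uS oru); apply: eq_card => v.
  rewrite in_set [in RHS]in_set.
  apply/andP/andP => [[vS e]|[vS e]]; split => //.
    exact: (solT_child_closed (k := false) wf uS vS e).
  exact: (subsetP (solT_child_sub f t0 t1 A d false)).
- rewrite -(IH1 _ _ _ wf1 uS oru); apply: eq_card => v.
  rewrite in_set [in RHS]in_set.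
  apply/andP/andP => [[vS e]|[vS e]]; split => //.
    exact: (solT_child_closed (k := true) wf uS vS e).
  exact: (subsetP (solT_child_sub f t0 t1 A d true)).
Qed.

Definition edge_in (S : {set node}) : rel node := fun x y => [&& x \in S, y \in S & E x y].

Lemma connect_edge_inS (S S' : {set node}) : S \subset S' ->
  subrel (connect (edge_in S)) (connect (edge_in S')).
Proof.
move=> sub; apply: connect_sub => x y /and3P[xS yS e]; apply: connect1.
by rewrite /edge_in (subsetP sub _ xS) (subsetP sub _ yS).
Qed.

Lemma solT_connect T A d u : wf_subtree T A d -> u \in solT T A d ->
  connect (edge_in (solT T A d)) (OrN A (inord d)) u.
Proof.
elim: T A d u => [|f t0 IH0 t1 IH1] A d u wf.
  case/solT_LeafP => ->; first exact: connect0.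
  apply: connect1; rewrite /edge_in !inE !eqxx orbT.
  exact: edge_OrN_TermN (wf_subtree_set0 wf).
have [A0 dF fA wf0 wf1] := wf_subtree_Node wf.
set S := solT _ A d.
have oS : OrN A (inord d) \in S by exact: solT_root.
have aS : AndN A (inord d) f \in S by rewrite !in_setU1 eqxx orbT.
have oa : connect (edge_in S) (OrN A (inord d)) (AndN A (inord d) f).
  by apply: connect1; rewrite /edge_in oS aS edge_OrN_AndN.
have a_child (k : bool) : connect (edge_in S) (OrN A (inord d))
    (OrN (restr X A f k) (inord d.+1)).
  apply: connect_trans oa (connect1 _).
  rewrite /edge_in aS edge_AndN_OrN //.
  by rewrite (subsetP (solT_child_sub f t0 t1 A d k)) ?solT_root.
case/solT_NodeP => [->|->|uS|uS].
- exact: connect0.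
- exact: oa.
- apply: connect_trans (a_child false) _.
  exact: connect_edge_inS (solT_child_sub f t0 t1 A d false) _ _ (IH0 _ _ _ wf0 uS).
- apply: connect_trans (a_child true) _.
  exact: connect_edge_inS (solT_child_sub f t0 t1 A d true) _ _ (IH1 _ _ _ wf1 uS).
Qed.

Lemma root_inord : Defs.root N F = OrN [set: 'I_N] (inord 0).
Proof. by congr OrN; apply: val_inj; rewrite /= inordK. Qed.

Lemma solT_solution_graph T : nonempty_nodes X T [set: 'I_N] ->
  solution_graph X (solT T [set: 'I_N] 0).
Proof.
move=> /wf_subtree_root wf; split.
- apply/subsetP => u uS; rewrite inE /G_node root_inord.
  by apply: connect_sub (solT_connect wf uS) => x y /and3P[_ _ /connect1].
- by rewrite root_inord solT_root.
- by move=> u uS; rewrite root_inord; exact: solT_connect.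
- by move=> u uS andu v; exact: solT_and_closed.
- by move=> u uS; exact: solT_or_succ.
Qed.

Lemma solution_graph_OrN S A d : solution_graph X S -> (d < F.+1)%N ->
  OrN A (inord d) \in S ->
  A != set0 /\
  (TermN A (inord d) \in S \/
   exists f, [/\ (d < F)%N, f \in Vset X A, AndN A (inord d) f \in S,
                 OrN (restr X A f false) (inord d.+1) \in S &
                 OrN (restr X A f true) (inord d.+1) \in S]).
Proof.
case=> _ _ _ Sand Sor dF oS.
have /eqP/cards1P[w Sw] := Sor _ oS isT.
have : w \in [set v in S | E (OrN A (inord d)) v] by rewrite Sw set11.
rewrite in_set => /andP[]; case: w {Sw} => [//|B e|B e f] wS.
  by case/and3P => A0 /eqP BA /eqP ed; subst; split; [|left].
case/and5P => A0 /eqP BA /eqP ed dF' fA; subst; rewrite inordK // in dF'.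
split => //; right; exists f; split => //; apply: (Sand _ wS isT); exact: edge_AndN_OrN.
Qed.

Lemma solution_graph_subtree S A d : solution_graph X S -> (d < F.+1)%N ->
  OrN A (inord d) \in S -> exists2 T, nonempty_nodes X T A & solT T A d \subset S.
Proof.
move=> sg; have [n] := ubnP (F - d); elim: n A d => // n IH A d dn dF oS.
have [A0 [tS|[f [dF' fA aS o0S o1S]]]] := solution_graph_OrN sg dF oS.
  exists Leaf; first by rewrite /= A0.
  by apply/subsetP => v /solT_LeafP[]->.
have dn' : (F - d.+1 < n)%N by rewrite subnS -ltnS (leq_trans _ dn) // prednK // subn_gt0.
have [T0 ne0 sub0] := IH _ _ dn' dF' o0S.
have [T1 ne1 sub1] := IH _ _ dn' dF' o1S.
exists (Node f T0 T1); first by rewrite /= A0 ne0 ne1.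
by apply/subsetP => v /solT_NodeP[->|->|/(subsetP sub0)|/(subsetP sub1)].
Qed.

Lemma solT_succ_closed S T A d x y : solution_graph X S -> wf_subtree T A d ->
  solT T A d \subset S -> x \in solT T A d -> y \in S -> E x y -> y \in solT T A d.
Proof.
case=> _ _ _ _ Sor wf sub + yS; case: x => [B e|B e|B e g] xT // xy; last first.
  exact: solT_and_closed wf xT isT xy.
set succT := [set v in solT T A d | E (OrN B e) v].
have succ_sub : succT \subset [set v in S | E (OrN B e) v].
  by apply/subsetP => v; rewrite !in_set => /andP[/(subsetP sub) -> ->].
have card_succ : #|succT| = #|[set v in S | E (OrN B e) v]|.
  by rewrite (solT_or_succ wf) ?Sor ?(subsetP sub).
by have := subset_cardP card_succ succ_sub y; rewrite !in_set yS xy andbT => ->.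
Qed.

Lemma solution_graph_solT S : solution_graph X S ->
  exists2 T, nonempty_nodes X T [set: 'I_N] & solT T [set: 'I_N] 0 = S.
Proof.
move=> sg; have [_ rootS Sconn _ _] := sg.
rewrite root_inord in rootS Sconn.
have [T ne sub] := solution_graph_subtree sg (ltn0Sn F) rootS.
exists T => //; apply/eqP; rewrite eqEsubset sub; apply/subsetP => u uS.
apply: forward_closed_connect (Sconn u uS) (solT_root _ _ _) => x y xT /and3P[_ yS xy].
exact: solT_succ_closed sg (wf_subtree_root ne) sub xT yS xy.
Qed.

Definition cost_between (S1 S2 : {set node}) : \bar R :=
  (\sum_(u in S1) \sum_(v in S2 | E u v) ecost u v)%E.

Lemma costE S : cost S = cost_between S S.
Proof. by []. Qed.

Lemma cost_betweenUl (S1 S2 S : {set node}) : [disjoint S1 & S2] ->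
  cost_between (S1 :|: S2) S = (cost_between S1 S + cost_between S2 S)%E.
Proof. by move=> dS; rewrite /cost_between -bigU //; apply: eq_bigl => u; rewrite !inE. Qed.

Lemma cost_betweenUr (S S1 S2 : {set node}) : [disjoint S1 & S2] ->
  cost_between S (S1 :|: S2) = (cost_between S S1 + cost_between S S2)%E.
Proof.
move=> dS; rewrite /cost_between -big_split; apply: eq_bigr => u _ /=.
by rewrite !big_mkcondr -bigU //; apply: eq_bigl => v; rewrite !inE.
Qed.

Lemma cost_between_set1 u v :
  cost_between [set u] [set v] = if E u v then ecost u v else 0%E.
Proof. by rewrite /cost_between big_set1 big_mkcondr big_set1. Qed.

Lemma cost_between_noedge (S1 S2 : {set node}) :
  (forall u v, u \in S1 -> v \in S2 -> ~~ E u v) -> cost_between S1 S2 = 0%E.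
Proof.
move=> noE; apply: big1 => u uS; apply: big1 => v /andP[vS].
by rewrite (negbTE (noE _ _ uS vS)).
Qed.

Lemma cost_set1 u : cost [set u] = 0%E.
Proof. by rewrite costE cost_between_set1; case: u. Qed.

Lemma cost_setU (S1 S2 : {set node}) : [disjoint S1 & S2] ->
  (forall u v, u \in S2 -> v \in S1 -> ~~ E u v) ->
  cost (S1 :|: S2) = (cost S1 + cost S2 + cost_between S1 S2)%E.
Proof.
move=> dS noE; rewrite !costE cost_betweenUl // !cost_betweenUr //.
by rewrite (cost_between_noedge noE) add0e addeAC.
Qed.

Lemma cost_solT_Leaf A d : wf_subtree Leaf A d ->
  cost (solT Leaf A d)
  = (nlog (pleaf X alpha beta d A)
     + nlog (lleaf rho1 rho0 (cnt Y true A) (cnt Y false A)))%E.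
Proof.
move=> wf; have [dF A0] := (wf_subtree_depth wf, wf_subtree_set0 wf).
rewrite cost_setU ?disjoints1 ?in_set1 //; last by move=> u v /set1P-> /set1P->.
by rewrite !cost_set1 cost_between_set1 /= A0 !eqxx /= !add0e inordK.
Qed.

Lemma cost_solT_Node f t0 t1 A d : wf_subtree (Node f t0 t1) A d ->
  cost (solT (Node f t0 t1) A d)
  = (cost (solT t0 (restr X A f false) d.+1) + cost (solT t1 (restr X A f true) d.+1)
     + nlog (pinner X alpha beta d A))%E.
Proof.
move=> wf; have [A0 dF fA wf0 wf1] := wf_subtree_Node wf.
have dF1 : (d < F.+1)%N := ltnW dF.
set o : node := OrN A (inord d); set a : node := AndN A (inord d) f.
set S0 := solT t0 _ _; set S1 := solT t1 _ _.
have depth_o : node_depth o = d by rewrite /= inordK.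
have depth_a : node_depth a = d by rewrite /= inordK.
have deep u : u \in S0 :|: S1 -> (d < node_depth u)%N.
  by rewrite inE => /orP[/(solT_below wf0)|/(solT_below wf1)] /and3P[].
have no_edge u v : node_depth v != (node_depth u + is_and u)%N -> ~~ E u v.
  by apply: contra => /edge_node_depth/eqP.
have a_notin : a \notin S0 :|: S1 by apply/negP => /deep; rewrite depth_a ltnn.
have o_notin : o \notin a |: (S0 :|: S1).
  rewrite in_setU1 negb_or; apply/andP; split => //.
  by apply/negP => /deep; rewrite depth_o ltnn.
have dS01 : [disjoint S0 & S1].
  rewrite -setI_eq0; apply/eqP/setP => u; rewrite !inE; apply/negP => /andP[u0 u1].
  exact: below_disjoint (disjoint_restr A f) (solT_below wf0 u0) (solT_below wf1 u1).
change (solT _ A d) with ([set o] :|: ([set a] :|: (S0 :|: S1))).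
rewrite cost_setU ?disjoints1 //; last first.
  move=> u v; rewrite in_setU1 in_set1 => /orP[/eqP->|/deep du] /eqP->; apply: no_edge.
    by rewrite depth_o depth_a addn1 ltn_eqF.
  by rewrite depth_o ltn_eqF // (leq_trans du) ?leq_addr.
rewrite cost_setU ?disjoints1 //; last first.
  move=> u v /deep du /set1P->; apply: no_edge.
  by rewrite depth_a ltn_eqF // (leq_trans du) ?leq_addr.
rewrite cost_setU //; last first.
  move=> u v /(solT_below wf1) u1 /(solT_below wf0) v0.
  by apply: below_noedge u1 v0; rewrite disjoint_sym disjoint_restr.
rewrite (@cost_between_noedge S0); last first.
  move=> u v /(solT_below wf0) u0 /(solT_below wf1) v1.
  exact: below_noedge (disjoint_restr A f) u0 v1.
have -> : cost_between [set a] (S0 :|: S1) = 0%E by apply: big1 => u /set1P->; apply: big1.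
rewrite cost_betweenUr ?disjoints1 // cost_between_set1.
rewrite (@cost_between_noedge [set o]); last first.
  by move=> u v /set1P-> /deep dv; apply: no_edge; rewrite depth_o addn0 gtn_eqF.
rewrite !cost_set1 /= A0 !eqxx inordK // dF fA /=.
by rewrite !add0e !adde0.
Qed.

Hypotheses (alpha_ge0 : 0 <= alpha) (alpha_le1 : alpha <= 1) (beta_ge0 : 0 <= beta).

Lemma cost_solT T A d : wf_subtree T A d ->
  cost (solT T A d) = (nlog (lik X Y rho1 rho0 T A) + nlog (prior X alpha beta T A d))%E.
Proof.
elim: T A d => [|f t0 IH0 t1 IH1] A d wf; first by rewrite cost_solT_Leaf // addeC.
have [_ _ _ wf0 wf1] := wf_subtree_Node wf.
rewrite cost_solT_Node // IH0 // IH1 //= !nlogM ?mulr_ge0 ?lik_ge0 ?prior_ge0 ?pinner_ge0 //.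
set L0 := nlog (lik _ _ _ _ t0 _); set L1 := nlog (lik _ _ _ _ t1 _).
set P0 := nlog (prior _ _ _ t0 _ _); set P1 := nlog (prior _ _ _ t1 _ _).
set Pi := nlog (pinner _ _ _ _ _).
rewrite addeACA -[(L0 + L1 + _ + _)%E]addeA [(P0 + P1 + _)%E]addeC.
by rewrite -[(Pi + P0 + P1)%E]addeA.
Qed.

End AndOrGraph.

Theorem theorem6 (R : realType) (N F : nat)
  (X : 'I_N -> 'I_F -> bool) (Y : 'I_N -> bool) (rho1 rho0 alpha beta : R) :
  0 < rho1 -> 0 < rho0 -> 0 < alpha < 1 -> 0 <= beta ->
  (forall T : dtree F, nonempty_nodes X T [set: 'I_N] ->
     cost X Y rho1 rho0 alpha beta (solT X T [set: 'I_N] 0)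
     = nlog (joint X Y rho1 rho0 alpha beta T)) /\
  (forall S : {set node N F},
     solution_graph X S ->
     (forall S', solution_graph X S' ->
        (cost X Y rho1 rho0 alpha beta S <= cost X Y rho1 rho0 alpha beta S')%E) ->
     exists T : dtree F,
       [/\ nonempty_nodes X T [set: 'I_N],
           solT X T [set: 'I_N] 0 = S &
           forall T' : dtree F, nonempty_nodes X T' [set: 'I_N] ->
             joint X Y rho1 rho0 alpha beta T' <= joint X Y rho1 rho0 alpha beta T]).
Proof.
move=> _ _ /andP[/ltW alpha_ge0 /ltW alpha_le1] beta_ge0.
have cost_joint T : nonempty_nodes X T [set: 'I_N] ->
    cost X Y rho1 rho0 alpha beta (solT X T [set: 'I_N] 0)
    = nlog (joint X Y rho1 rho0 alpha beta T).
  by move=> ne; rewrite cost_solT ?wf_subtree_root // nlogM ?lik_ge0 ?prior_ge0.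
split=> // S sg S_min.
have [T ne TS] := solution_graph_solT sg; subst S.
exists T; split=> // T' ne'.
rewrite -lee_nlog ?joint_ge0 // -!cost_joint //.
by apply: S_min; exact: solT_solution_graph.
Qed.
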